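(* Let $L$ be a relational language and $<\,\notin L$ a binary relation symbol. Let $\mathcal{S} = (S, L^S, <^S)$ be an enumerated $L$-structure such that $(S, L^S)$ is a Fraïssé limit which has finite big Ramsey degrees, whose age has the strong amalgamation property, and which has natural 1-point extensions. Let $\mathbf{K} = \mathrm{Fin}(\mathcal{S})$, viewed as a category with embeddings as morphisms, as a full subcategory of the category $\mathbf{C}$ of all $(L\cup\{<\})$-structures with embeddings, with discrete enrichment. Then: (a) $\mathbf{K}$ has natural 1-point extensions. (b) $\mathcal{S}$ is approximable in $\mathbf{K}$. (c) Fix a functor $F : \mathbf{K}\to\mathbf{K}$ and a family $(\Phi_\mathcal{A})_{\mathcal{A}\in\mathbf{K}}$ such that $\mathcal{S}$ is approximable in $\mathbf{K}$ via (the object map of) $F$ and $(\Phi_\mathcal{A})$, and for each $\mathcal{B}\in\mathbf{K}$ fix an embedding $\iota_\mathcal{B} : \mathcal{B}\hookrightarrow\mathcal{S}$. For every $\mathcal{A}\in\mathbf{K}$ there is an $n\in\mathbb{N}$ such that for every $k\in\mathbb{N}$ and every coloring $\chi : \bigcup_{\mathcal{B}\in\mathbf{K}}\mathrm{Emb}(\mathcal{A},\mathcal{B})\to k$ there is $h\in\mathrm{Emb}(\mathcal{S},\mathcal{S})$ with $$\Big|\chi\Big(\bigcup_{\mathcal{B}\in\mathbf{K}} h\star\mathrm{Emb}(\mathcal{A},\mathcal{B})\Big)\Big|\le n,$$ where $h\star f = \Phi_\mathcal{B}(h\circ\iota_{F(\mathcal{B})})\circ f$ for $f\in\mathrm{E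mb}(\mathcal{A},\mathcal{B})$.
   Context: For $L$-structures, an embedding is an injective map preserving and reflecting all relations; $\mathrm{Emb}(\mathcal{A},\mathcal{B})$ is the set of embeddings. $\mathcal{A}\le\mathcal{B}$ means $\mathcal{A}$ is a substructure (induced) of $\mathcal{B}$; for nonempty $C\subseteq B$, $\mathcal{B}[C]$ is the induced substructure. $\mathrm{Fin}(\mathcal{S}) = \{\mathcal{S}[A] : \varnothing\neq A\subseteq S, A \text{ finite}\}$. An enumerated $L$-structure is an $(L\cup\{<\})$-structure $(S,L^S,<^S)$ with $(S,<^S)$ a linear order of type $\omega$. A Fraïssé limit is a countably infinite ultrahomogeneous structure; its age (class of finite structures embeddable in it) has strong amalgamation if for all embeddings $f:\mathcal{A}\hookrightarrow\mathcal{B}$, $g:\mathcal{A}\hookrightarrow\mathcal{C}$ in the age there are $\mathcal{D}$ in the age and embeddings $f':\mathcal{B}\hookrightarrow\mathcal{D}$, $g':\mathcal{C}\hookrightarrow\mathcal{D}$ with $f'\circ f=g'\circ g$ and $f'(B)\cap g'(C)=f'(f(A))$. A countable structure $\mathcal{F}$ has finite big Ramsey degrees if for every finite $\mathcal{A}$ in its age there is $n\in\mathbb{N}$ such that for every $k$ and every coloring $\chi:\mathrm{Emb}(\mathcal{A},\mathcal{F})\to k$ there is $w\in\mathrm{Emb}(\mathcal{F},\mathcal{F})$ with $|\chi(w\circ\mathrm{Emb}(\mathcal{A},\mathcal{F}))|\le n$; the least such $n$ is $T(\mathcal{A},\mathcal{F})$. A structure $\mathcal{F}$ has natural 1-point extensions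 if there is a functor $J:\mathrm{Fin}(\mathcal{F})\to\mathrm{Fin}(\mathcal{F})$ (morphisms: embeddings) such that for every $\mathcal{A}=(A,L^A)\in\mathrm{Fin}(\mathcal{F})$ with $J(\mathcal{A})=(A',L^{A'})$ we have $\mathcal{A}\le J(\mathcal{A})$ and $|A'\setminus A|=1$, and for every embedding $f:\mathcal{A}\hookrightarrow\mathcal{B}$ in $\mathrm{Fin}(\mathcal{F})$, $J(f)(a)=f(a)$ for $a\in A$ and $J(f)$ maps the point of $A'\setminus A$ to the point of $B'\setminus B$. (Statement (a) means the class $\mathbf{K}=\mathrm{Fin}(\mathcal{S})$ of finite substructures of the enumerated structure, with embeddings, admits such a functor.) For a category $\mathbf{C}$ enriched over $\mathbf{Top}$ (here discretely), a full subcategory $\mathbf{D}$ and $S\in\mathrm{Ob}(\mathbf{C})$, $S$ is approximable in $\mathbf{D}$ if there are a map $F:\mathrm{Ob}(\mathbf{D})\to\mathrm{Ob}(\mathbf{D})$ and Borel maps $\Phi_A:\hom_\mathbf{C}(F(A),S)\to\bigcup_{C\in\mathrm{Ob}(\mathbf{D})}\hom_\mathbf{D}(A,C)$ such that for all $A,B\in\mathrm{Ob}(\mathbf{D})$, $f\in\hom_\mathbf{D}(A,B)$ and $u\in\hom_\mathbf{C}(F(B),S)$ there is $f'\in\hom_\mathbf{D}(F(A),F(B))$ with $\Phi_A(u\cdot f')=\Phi_B(u)\cdot f$. *)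

From Stdlib Require List.
From mathcomp Require Import all_boot.
Set Implicit Arguments. Unset Strict Implicit. Unset Printing Implicit Defensive.

Record language := Language { sym : Type; arity : sym -> nat }.

Record structure (L : language) := Structure {
  car :> Type;
  rel : forall s : sym L, ('I_(@arity L s) -> car) -> Prop }.
Arguments rel {L} _ _ _.

Definition is_emb (L : language) (A B : structure L) (f : A -> B) : Prop :=
  injective f /\ forall (s : sym L) (t : 'I_(@arity L s) -> A), rel A s t <-> rel B s (f \o t).

Definition Emb (L : language) (A B : structure L) := {f : A -> B | is_emb f}.

Definition emb_fun (L : language) (A B : structure L) (f : Emb A B) : A -> B := proj1_sig f.
Coercion emb_fun : Emb >-> Funclass.

Lemma is_emb_comp (L : language) (A B C : structure L) (g : Emb B C) (f : Emb A B) :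
  is_emb (fun x => g (f x)).
Proof.
case: g => g [gi gr]; case: f => f [fi fr]; split => /=.
- by move=> x y /gi /fi.
- by move=> s t; rewrite fr gr.
Qed.

Definition comp (L : language) (A B C : structure L) (g : Emb B C) (f : Emb A B) : Emb A C :=
  exist _ (fun x => g (f x)) (is_emb_comp g f).

Lemma is_emb_id (L : language) (A : structure L) : is_emb (fun x : A => x).
Proof. by split => // x y. Qed.

Definition id_emb (L : language) (A : structure L) : Emb A A := exist _ (fun x => x) (is_emb_id A).

Definition finite_pred (T : Type) (A : T -> Prop) : Prop :=
  exists l : list T, forall x, A x -> List.In x l.

Definition finite_type (T : Type) : Prop := exists l : list T, forall x : T, List.In x l.

Definition sub (L : language) (X : structure L) (A : X -> Prop) : structure L :=
  {| car := {x : X | A x};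
     rel := fun s t => rel X s (fun i => proj1_sig (t i)) |}.
Arguments sub {L} X A.

(* Objects of Fin(X): finite nonempty subsets A of X, standing for X[A] *)
Definition FinObj (L : language) (X : structure L) :=
  {A : X -> Prop | finite_pred A /\ exists x, A x}.

Definition pr (L : language) (X : structure L) (A : FinObj X) : X -> Prop := proj1_sig A.

Definition Fin (L : language) (X : structure L) (A : FinObj X) : structure L := @sub L X (@pr L X A).

(* the language L u {<}: the new symbol (None) is binary and not in L *)
Definition ext (L : language) : language :=
  {| sym := option (sym L);
     arity := fun o => match o with Some s => @arity L s | None => 2 end |}.

Definition pair2 (T : Type) (x y : T) : 'I_2 -> T :=
  fun i => if nat_of_ord i is 0 then x else y.

Definition ltS (L : language) (X : structure (ext L)) (x y : X) : Prop :=
  rel X None (pair2 x y).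

Definition enumerated (L : language) (X : structure (ext L)) : Prop :=
  exists e : nat -> X, bijective e /\ forall m n, ltS (e m) (e n) <-> (m < n)%N.

Definition reduct (L : language) (X : structure (ext L)) : structure L :=
  {| car := car X; rel := fun s t => rel X (Some s) t |}.

Definition countably_infinite (T : Type) : Prop := exists e : nat -> T, bijective e.

Definition surjective (T U : Type) (f : T -> U) : Prop := forall y, exists x, f x = y.

Definition ultrahomogeneous (L : language) (X : structure L) : Prop :=
  forall (A B : X -> Prop), finite_pred A -> finite_pred B ->
  forall f : Emb (sub X A) (sub X B), surjective f ->
  exists g : Emb X X, surjective g /\ forall x : sub X A, g (proj1_sig x) = proj1_sig (f x).

Definition fraisse_limit (L : language) (X : structure L) : Prop :=
  countably_infinite X /\ ultrahomogeneous X.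

Definition in_age (L : language) (X : structure L) (A : structure L) : Prop :=
  finite_type A /\ inhabited (Emb A X).

Definition strong_amalgamation (L : language) (X : structure L) : Prop :=
  forall (A B C : structure L) (f : Emb A B) (g : Emb A C),
  in_age X A -> in_age X B -> in_age X C ->
  exists (D : structure L) (f' : Emb B D) (g' : Emb C D),
    in_age X D /\ (forall a, f' (f a) = g' (g a)) /\
    (forall d : D, ((exists b, f' b = d) /\ (exists c, g' c = d)) <-> exists a, f' (f a) = d).

Definition finite_big_ramsey_degrees (L : language) (X : structure L) : Prop :=
  forall A : structure L, in_age X A ->
  exists n : nat, forall (k : nat) (chi : Emb A X -> 'I_k),
  exists w : Emb X X, exists s : seq 'I_k,
    (size s <= n)%N /\ forall e : Emb A X, chi (comp w e) \in s.

Definition nat_1pt_ext (L : language) (X : structure L) : Prop :=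
  exists (J : FinObj X -> FinObj X)
         (Jm : forall A B : FinObj X, Emb (Fin A) (Fin B) -> Emb (Fin (J A)) (Fin (J B))),
    (forall A : FinObj X, Jm A A (id_emb (Fin A)) = id_emb (Fin (J A))) /\
    (forall (A B C : FinObj X) (f : Emb (Fin A) (Fin B)) (g : Emb (Fin B) (Fin C)),
        Jm A C (comp g f) = comp (Jm B C g) (Jm A B f)) /\
    (forall A : FinObj X, (forall x, pr A x -> pr (J A) x) /\
        exists p, pr (J A) p /\ ~ pr A p /\ forall q, pr (J A) q -> ~ pr A q -> q = p) /\
    (forall (A B : FinObj X) (f : Emb (Fin A) (Fin B)) (x : Fin (J A)) (y : Fin A),
        proj1_sig x = proj1_sig y -> proj1_sig (Jm A B f x) = proj1_sig (f y)) /\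
    (forall (A B : FinObj X) (f : Emb (Fin A) (Fin B)) (x : Fin (J A)),
        ~ pr A (proj1_sig x) -> ~ pr B (proj1_sig (Jm A B f x))).

(* ---------- approximability (discrete enrichment: every map is Borel) ---------- *)
(* the disjoint union  U_{C in K} hom_K(A, C) *)
Definition Ucod (L : language) (X : structure L) (A : FinObj X) :=
  {C : FinObj X & Emb (Fin A) (Fin C)}.

Definition approx_via (L : language) (X : structure L) (F : FinObj X -> FinObj X)
  (Phi : forall A : FinObj X, Emb (Fin (F A)) X -> Ucod A) : Prop :=
  forall (A B : FinObj X) (f : Emb (Fin A) (Fin B)) (u : Emb (Fin (F B)) X),
  exists f' : Emb (Fin (F A)) (Fin (F B)),
    Phi A (comp u f') = existT _ (projT1 (Phi B u)) (comp (projT2 (Phi B u)) f).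

Arguments approx_via {L X} F Phi.

Definition approximable (L : language) (X : structure L) : Prop :=
  exists (F : FinObj X -> FinObj X) (Phi : forall A : FinObj X, Emb (Fin (F A)) X -> Ucod A),
    approx_via F Phi.

Definition is_functor (L : language) (X : structure L) (F : FinObj X -> FinObj X)
  (Fm : forall A B : FinObj X, Emb (Fin A) (Fin B) -> Emb (Fin (F A)) (Fin (F B))) : Prop :=
  (forall A : FinObj X, Fm A A (id_emb (Fin A)) = id_emb (Fin (F A))) /\
  (forall (A B C : FinObj X) (f : Emb (Fin A) (Fin B)) (g : Emb (Fin B) (Fin C)),
      Fm A C (comp g f) = comp (Fm B C g) (Fm A B f)).

Arguments is_functor {L X} F Fm.

Definition star (L : language) (X : structure L) (F : FinObj X -> FinObj X)
  (Phi : forall A : FinObj X, Emb (Fin (F A)) X -> Ucod A)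
  (iota : forall B : FinObj X, Emb (Fin B) X)
  (h : Emb X X) (A B : FinObj X) (f : Emb (Fin A) (Fin B)) : Ucod A :=
  existT _ (projT1 (Phi B (comp h (iota (F B)))))
           (comp (projT2 (Phi B (comp h (iota (F B))))) f).
Arguments star {L X} F Phi iota h {A B} f.

(* Ultrahomogeneity and strong amalgamation of the reduct give the extension
   property: a finite partial embedding extends to any new point, with the image
   chosen outside any given finite set, hence as late as we like in the
   enumeration.
   (a) [J A] adds to [A] a point realizing over [A] the type of the new point of
   [Jr A] and lying above [A]; [J f] extends [f] by sending new point to new
   point. It is [Jr f] up to the swap of new points, so it preserves [L], and new
   points are maximal, so it preserves [<].
   (b) [Phi_A u] restricts [u : J A -> S] to [A], landing in the initial segment
   of [S] up to the image of the new point; [J f] is the required [f'].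
   (c) For every self-embedding [w] of the reduct, building [v] point by point
   so that [w \o v] is increasing makes [w \o v] a self-embedding of [S]; so
   [S] inherits finite big Ramsey degrees from its reduct. Applied to [F A] and
   the colouring [chi \o Phi_A] they bound the colours of the [h * f], since
   [h * f = Phi_A (h \o iota_(F B) \o f')] by approximability. *)

From mathcomp Require Import all_boot.
From Stdlib Require List.
From Stdlib Require Import Classical ClassicalEpsilon FunctionalExtensionality ProofIrrelevance.
Set Implicit Arguments. Unset Strict Implicit. Unset Printing Implicit Defensive.

Lemma proj1_sig_inj (T : Type) (P : T -> Prop) : injective (@proj1_sig T P).
Proof. by move=> [x px] [y py] /= exy; subst y; rewrite (proof_irrelevance _ px py). Qed.

Lemma eq_emb (L : language) (A B : structure L) (f g : Emb A B) : f =1 g -> f = g.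
Proof. by move=> fg; apply: proj1_sig_inj; apply: functional_extensionality. Qed.

Lemma emb_inj (L : language) (A B : structure L) (f : Emb A B) : injective f.
Proof. exact: (proj1 (proj2_sig f)). Qed.

Lemma emb_rel (L : language) (A B : structure L) (f : Emb A B) s t :
  rel A s t <-> rel B s (f \o t).
Proof. exact: (proj2 (proj2_sig f) s t). Qed.

Definition upd (T U : Type) (f : T -> U) (x : T) (y : U) : T -> U :=
  fun z => if excluded_middle_informative (z = x) then y else f z.

Lemma upd_eq (T U : Type) (f : T -> U) x y : upd f x y x = y.
Proof. by rewrite /upd; case: excluded_middle_informative. Qed.

Lemma upd_neq (T U : Type) (f : T -> U) x y z : z <> x -> upd f x y z = f z.
Proof. by rewrite /upd; case: excluded_middle_informative. Qed.

Section Finite.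
Variable T : Type.

Lemma finite_predU (P Q : T -> Prop) :
  finite_pred P -> finite_pred Q -> finite_pred (fun z => P z \/ Q z).
Proof.
move=> [l1 H1] [l2 H2]; exists (l1 ++ l2)%list => z [pz|qz];
  apply: List.in_or_app; [left; exact: H1 | right; exact: H2].
Qed.

Lemma finite_pred1 (x : T) : finite_pred (fun z => z = x).
Proof. by exists (x :: nil)%list => z ->; left. Qed.

Lemma finite_image (U : Type) (P : T -> Prop) (f : T -> U) :
  finite_pred P -> finite_pred (fun y => exists x, P x /\ f x = y).
Proof. by move=> [l Pl]; exists (List.map f l) => _ [x [Px <-]]; apply/List.in_map/Pl. Qed.

Lemma finite_bounded (P : T -> Prop) (g : T -> nat) :
  finite_pred P -> exists M, forall z, P z -> g z < M.
Proof.
move=> [l H]; exists (foldr (fun x m => maxn (g x) m) 0 l).+1 => z /H.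
rewrite ltnS; elim: l {H} => //= x l IH [<-|/IH le]; first exact: leq_maxl.
exact: leq_trans le (leq_maxr _ _).
Qed.

Lemma finite_lt_inj (g : T -> nat) M : injective g -> finite_pred (fun z => g z < M).
Proof.
move=> g_inj.
pose inv m := if excluded_middle_informative (exists z, g z = m) is left ex
              then (proj1_sig (constructive_indefinite_description _ ex) :: nil)%list
              else nil.
exists (List.flat_map inv (List.seq 0 M)) => z ltM.
apply/List.in_flat_map; exists (g z); split; first by apply/List.in_seq; split; apply/leP.
rewrite /inv; case: excluded_middle_informative => [ex|[]]; last by exists z.
by case: constructive_indefinite_description => y /= /g_inj ->; left.
Qed.

End Finite.

Section PartialEmbeddings.
Variables (L : language) (X : structure L).

Definition partial_emb (P : X -> Prop) (phi : X -> X) :=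
  (forall a b, P a -> P b -> phi a = phi b -> a = b) /\
  (forall s (t : 'I_(arity s) -> X), (forall i, P (t i)) ->
     (rel X s t <-> rel X s (phi \o t))).

Lemma partial_emb_id (P : X -> Prop) : partial_emb P id.
Proof. by []. Qed.

Lemma partial_emb_restr (P Q : X -> Prop) phi psi : partial_emb P phi ->
  (forall z, Q z -> P z) -> (forall z, Q z -> phi z = psi z) -> partial_emb Q psi.
Proof.
move=> [phi_inj phi_rel] QP eq_phi; split.
  by move=> a b Qa Qb; rewrite -!eq_phi //; apply: phi_inj; apply: QP.
move=> s t Qt; have -> : psi \o t = phi \o t.
  by apply: functional_extensionality => i /=; rewrite eq_phi.
by apply: phi_rel => i; apply: QP.
Qed.

Lemma partial_emb_comp (P Q : X -> Prop) phi psi :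
  (forall z, P z -> Q (phi z)) -> partial_emb P phi -> partial_emb Q psi ->
  partial_emb P (psi \o phi).
Proof.
move=> PQ [phi_inj phi_rel] [psi_inj psi_rel]; split.
  by move=> a b Pa Pb /psi_inj; move/(_ (PQ _ Pa) (PQ _ Pb)); apply: phi_inj.
by move=> s t Pt; rewrite (phi_rel s t Pt) (psi_rel s (phi \o t)) // => i; apply: PQ.
Qed.

Lemma partial_emb_inv (P Q : X -> Prop) phi psi : partial_emb P phi ->
  (forall z, Q z -> P (psi z) /\ phi (psi z) = z) -> partial_emb Q psi.
Proof.
move=> [phi_inj phi_rel] psiK; split.
  by move=> a b Qa Qb eab; rewrite -(proj2 (psiK a Qa)) -(proj2 (psiK b Qb)) eab.
move=> s t Qt; have {1}-> : t = phi \o (psi \o t).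
  by apply: functional_extensionality => i /=; rewrite (proj2 (psiK _ (Qt i))).
by rewrite -phi_rel // => i; apply: (proj1 (psiK _ (Qt i))).
Qed.

Lemma partial_emb_of_emb (P : X -> Prop) (psi : Emb (sub X P) X) (phi : X -> X) :
  (forall z (pz : P z), phi z = psi (exist _ z pz)) -> partial_emb P phi.
Proof.
move=> phiE; split.
  by move=> a b Pa Pb; rewrite (phiE a Pa) (phiE b Pb) => /emb_inj /(congr1 (@proj1_sig _ _)).
move=> s t Pt; pose t' i := exist P (t i) (Pt i).
have -> : phi \o t = psi \o t'.
  by apply: functional_extensionality => i /=; rewrite (phiE _ (Pt i)).
exact: (emb_rel psi t').
Qed.

Lemma is_emb_sub (P Q : X -> Prop) (phi : X -> X) (PQ : forall z, P z -> Q (phi z)) :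
  partial_emb P phi ->
  is_emb (fun x : sub X P => exist Q (phi (proj1_sig x)) (PQ _ (proj2_sig x)) : sub X Q).
Proof.
move=> [phi_inj phi_rel]; split.
  move=> [a Pa] [b Pb] /(congr1 (@proj1_sig _ _)) /= eab; apply: proj1_sig_inj => /=.
  exact: phi_inj.
by move=> s t; apply: (phi_rel s (fun i => proj1_sig (t i))) => i; apply: proj2_sig.
Qed.

Definition sub_emb (P Q : X -> Prop) (phi : X -> X) (PQ : forall z, P z -> Q (phi z))
  (phiP : partial_emb P phi) : Emb (sub X P) (sub X Q) := exist _ _ (is_emb_sub PQ phiP).

Lemma is_emb_val (P : X -> Prop) : is_emb (fun z : sub X P => proj1_sig z).
Proof. by split; first exact: proj1_sig_inj. Qed.

Definition val_emb (P : X -> Prop) : Emb (sub X P) X := exist _ _ (is_emb_val P).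

Definition lift_emb (P : X -> Prop) (f : sub X P -> X) : X -> X :=
  fun z => if excluded_middle_informative (P z) is left pz then f (exist P z pz) else z.

Lemma lift_embE (P : X -> Prop) (f : sub X P -> X) z (pz : P z) :
  lift_emb f z = f (exist P z pz).
Proof.
rewrite /lift_emb; case: excluded_middle_informative => // pz'.
by rewrite (proof_irrelevance _ pz' pz).
Qed.

Lemma partial_emb_lift (P : X -> Prop) (f : Emb (sub X P) X) : partial_emb P (lift_emb f).
Proof. by apply: partial_emb_of_emb => z pz; rewrite lift_embE. Qed.

Lemma finite_type_sub (P : X -> Prop) : finite_pred P -> finite_type (sub X P).
Proof.
move=> [l Pl].
exists (List.flat_map (fun x => if excluded_middle_informative (P x) is left px
                                then (exist P x px :: nil)%list else nil) l).
move=> [y py]; apply/List.in_flat_map; exists y; split; first exact: Pl.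
by case: excluded_middle_informative => // py'; left; apply: proj1_sig_inj.
Qed.

Lemma in_age_sub (P : X -> Prop) : finite_pred P -> in_age X (sub X P).
Proof. by move=> finP; split; [exact: finite_type_sub | constructor; exact: val_emb]. Qed.

End PartialEmbeddings.

Section Extension.
Variables (L : language) (X : structure L).
Hypotheses (X_uh : ultrahomogeneous X) (X_sap : strong_amalgamation X).

Lemma emb_sub_retraction (C : X -> Prop) (j : Emb (sub X C) X) : finite_pred C ->
  exists sigma : Emb X X, forall c, sigma (j c) = proj1_sig c.
Proof.
move=> finC; pose Im y := exists c, j c = y.
have finIm : finite_pred Im.
  have [l Cl] := finite_type_sub finC.
  by exists (List.map j l) => _ [c <-]; apply: List.in_map.
pose tau (y : sub X Im) := proj1_sig (constructive_indefinite_description _ (proj2_sig y)).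
have tauK y : j (tau y) = proj1_sig y.
  by rewrite /tau; case: constructive_indefinite_description.
have tau_emb : is_emb tau.
  split=> [y1 y2 e12|s t]; first by apply: proj1_sig_inj; rewrite -!tauK e12.
  rewrite /=; have -> : (fun i => proj1_sig (t i)) = j \o (tau \o t).
    by apply: functional_extensionality => i /=; rewrite tauK.
  exact: iff_sym (emb_rel j (tau \o t)).
have tau_surj : surjective (exist _ tau tau_emb : Emb (sub X Im) (sub X C)).
  move=> c; exists (exist Im (j c) (ex_intro _ c erefl)).
  by apply: (emb_inj (f := j)); rewrite /= tauK.
have [sigma [_ sigmaE]] := X_uh finIm finC tau_surj.
exists sigma => c; rewrite (sigmaE (exist Im (j c) (ex_intro _ c erefl))) /=.
by congr proj1_sig; apply: (emb_inj (f := j)); rewrite tauK.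
Qed.

(* Strongly amalgamate [A <= A + x] with [phi : A -> phi(A) + D], then pull the
   amalgam back into [X] along [emb_sub_retraction]; strongness keeps [x] off [D]. *)
Lemma partial_emb_extend (A D : X -> Prop) (x : X) (phi : X -> X) :
  finite_pred A -> finite_pred D -> ~ A x -> partial_emb A phi ->
  exists y, ~ D y /\ partial_emb (fun z => A z \/ z = x) (upd phi x y).
Proof.
move=> finA finD Ax phiP.
pose B z := A z \/ z = x; pose C z := (exists a, A a /\ phi a = z) \/ D z.
have finB : finite_pred B by apply: finite_predU => //; apply: finite_pred1.
have finC : finite_pred C by apply: finite_predU => //; apply: finite_image.
have AB z : A z -> B (id z) by left.
have AC z : A z -> C (phi z) by move=> Az; left; exists z.
pose f := sub_emb AB (partial_emb_id A); pose g := sub_emb AC phiP.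
have [E [f' [g' [[_ [k]] [fg strong]]]]] :=
  X_sap f g (in_age_sub finA) (in_age_sub finB) (in_age_sub finC).
have [sigma sigmaE] := emb_sub_retraction (comp k g') finC.
pose psi := comp sigma (comp k f'); pose bx : sub X B := exist B x (or_intror erefl).
exists (psi bx); split.
  move=> Dy; pose c : sub X C := exist C (psi bx) (or_intror Dy).
  have gc : g' c = f' bx.
    by apply: (emb_inj (f := k)); apply: (emb_inj (f := sigma)); rewrite (sigmaE c).
  have [[a Aa] /emb_inj /(congr1 (@proj1_sig _ _)) /= ax] : exists a, f' (f a) = f' bx.
    by apply/strong; split; [exists bx | exists c].
  by apply: Ax; rewrite -ax.
apply: (partial_emb_of_emb (psi := psi)) => z Bz.
have [zx|zx] := classic (z = x).
  by subst z; rewrite upd_eq; congr (psi _); apply: proj1_sig_inj.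
have Az : A z by case: Bz.
have -> : exist B z Bz = f (exist A z Az) by apply: proj1_sig_inj.
rewrite upd_neq // -[phi z]/(proj1_sig (g (exist A z Az))) -sigmaE.
by move: (fg (exist A z Az)); rewrite /psi /comp /= => ->.
Qed.

End Extension.

Section IncreasingEmbedding.
Variables (L : language) (X : structure L) (e : nat -> X) (idx : X -> nat).
Hypotheses (eK : cancel e idx) (idxK : cancel idx e).
Hypotheses (X_uh : ultrahomogeneous X) (X_sap : strong_amalgamation X).
Variables (g : X -> nat) (g_inj : injective g).

Lemma finite_idx_lt n : finite_pred (fun z => idx z < n).
Proof. exact: finite_lt_inj (can_inj idxK). Qed.

Definition increasing_upto n (phi : X -> X) :=
  partial_emb (fun z => idx z < n) phi /\
  forall i j, i < j -> j < n -> g (phi (e i)) < g (phi (e j)).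

Lemma increasing_upto_step n phi : increasing_upto n phi ->
  exists y, increasing_upto n.+1 (upd phi (e n) y).
Proof.
move=> [phiP phi_incr]; pose M := (\max_(j < n) g (phi (e j))).+1.
have en_new : ~ idx (e n) < n by rewrite eK ltnn.
have [y [yM yP]] :=
  partial_emb_extend X_uh X_sap (finite_idx_lt n) (finite_lt_inj M g_inj) en_new phiP.
exists y; split.
  apply: (partial_emb_restr yP) => // z; rewrite ltnS leq_eqVlt => /orP[/eqP <-|]; last by left.
  by right; rewrite idxK.
have updE j : j < n -> upd phi (e n) y (e j) = phi (e j).
  by move=> jn; rewrite upd_neq // => /(can_inj eK) jE; rewrite jE ltnn in jn.
move=> i j ij; rewrite ltnS leq_eqVlt => /orP[/eqP jE|jn].
  subst j; rewrite updE // upd_eq.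
  have My : M <= g y by rewrite leqNgt; apply/negP.
  apply: leq_trans My; rewrite ltnS.
  exact: (leq_bigmax (F := fun j : 'I_n => g (phi (e j))) (Ordinal ij)).
by rewrite !updE ?phi_incr // (ltn_trans ij).
Qed.

(* [epsilon] returns a genuine extension whenever [increasing_upto n phi] holds,
   by [increasing_upto_step]. *)
Definition next_point n phi :=
  epsilon (inhabits (e 0)) (fun y => increasing_upto n.+1 (upd phi (e n) y)).

Fixpoint chain n : X -> X :=
  if n is n'.+1 then upd (chain n') (e n') (next_point n' (chain n')) else id.

Lemma increasing_upto_chain n : increasing_upto n (chain n).
Proof.
elim: n => [|n IH]; first by split; [exact: partial_emb_id | case].
exact: epsilon_spec (increasing_upto_step IH).
Qed.

Lemma chain_stable m n z : idx z < m -> m <= n -> chain n z = chain m z.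
Proof.
move=> zm; elim: n => [|n IH]; first by rewrite leqn0 => /eqP m0; rewrite m0 in zm.
rewrite leq_eqVlt => /orP[/eqP -> //|]; rewrite ltnS => mn /=.
by rewrite upd_neq ?IH // => zE; rewrite zE eK in zm; rewrite ltnNge mn in zm.
Qed.

Definition chain_limit z := chain (idx z).+1 z.

Lemma chain_limitE n z : idx z < n -> chain_limit z = chain n z.
Proof. by move=> zn; rewrite (chain_stable (leqnn _) zn). Qed.

Lemma is_emb_chain_limit : is_emb chain_limit.
Proof.
split=> [a b|s t].
  pose N := (maxn (idx a) (idx b)).+1.
  rewrite !(chain_limitE (n := N)) ?ltnS ?leq_maxl ?leq_maxr //.
  by apply: (proj1 (proj1 (increasing_upto_chain N))); rewrite ltnS ?leq_maxl ?leq_maxr.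
pose N := (\max_i idx (t i)).+1.
have tN i : idx (t i) < N by rewrite ltnS; apply: (leq_bigmax (F := fun i => idx (t i))).
have -> : chain_limit \o t = chain N \o t.
  by apply: functional_extensionality => i; apply: chain_limitE.
exact: (proj2 (proj1 (increasing_upto_chain N))).
Qed.

Lemma exists_emb_increasing :
  exists v : Emb X X, forall m n, m < n -> g (v (e m)) < g (v (e n)).
Proof.
exists (exist _ _ is_emb_chain_limit) => m n mn /=.
rewrite !(chain_limitE (n := n.+1)) ?eK ?ltnS ?(ltnW mn) //.
exact: (proj2 (increasing_upto_chain n.+1)).
Qed.

End IncreasingEmbedding.

Section Ordered.
Variable L : language.

Lemma pair2_eta (T : Type) (t : 'I_2 -> T) : t = pair2 (t ord0) (t (lift ord0 ord0)).
Proof.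
by apply: functional_extensionality => -[[|[|m]] lt2] //=; congr t; apply: val_inj.
Qed.

Lemma pair2_comp (T U : Type) (f : T -> U) x y : f \o pair2 x y = pair2 (f x) (f y).
Proof. by apply: functional_extensionality => -[[|m] ?]. Qed.

Lemma ltS_sub (X : structure (ext L)) (P : X -> Prop) (x y : sub X P) :
  ltS x y <-> ltS (proj1_sig x) (proj1_sig y).
Proof. by rewrite /ltS /= -(pair2_comp (@proj1_sig _ _)). Qed.

Lemma emb_ltS (U V : structure (ext L)) (f : Emb U V) x y : ltS x y <-> ltS (f x) (f y).
Proof. by rewrite /ltS -pair2_comp; exact: (emb_rel f (s := None)). Qed.

Lemma is_emb_reduct (U V : structure (ext L)) (f : Emb U V) :
  is_emb (A := reduct U) (B := reduct V) f.
Proof. by split=> [|s]; [exact: (emb_inj (f := f)) | exact: (emb_rel f (s := Some s))]. Qed.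

Definition reduct_emb (U V : structure (ext L)) (f : Emb U V) : Emb (reduct U) (reduct V) :=
  exist _ _ (is_emb_reduct f).

Lemma is_emb_of_reduct (U V : structure (ext L)) (f : U -> V) :
  is_emb (A := reduct U) (B := reduct V) f ->
  (forall x y, ltS x y <-> ltS (f x) (f y)) -> is_emb f.
Proof.
move=> [f_inj f_rel] f_ltS; split=> // -[s|] t; first exact: f_rel.
by rewrite /= in t *; rewrite (pair2_eta t) pair2_comp; exact: f_ltS.
Qed.

Lemma partial_emb_of_reduct (X : structure (ext L)) (P : X -> Prop) (phi : X -> X) :
  partial_emb (X := reduct X) P phi ->
  (forall x y, P x -> P y -> ltS x y <-> ltS (phi x) (phi y)) -> partial_emb P phi.
Proof.
move=> [phi_inj phi_rel] phi_ltS; split=> // -[s|] t Pt; first exact: phi_rel.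
by rewrite /= in t Pt *; rewrite (pair2_eta t) pair2_comp; exact: phi_ltS.
Qed.

Lemma enumerated_idx (S : structure (ext L)) : enumerated S ->
  exists (e : nat -> S) (idx : S -> nat),
    [/\ cancel e idx, cancel idx e & forall x y, ltS x y <-> idx x < idx y].
Proof.
move=> [e [[idx eK idxK] e_lt]]; exists e, idx; split=> // x y.
by rewrite -{1}(idxK x) -{1}(idxK y) e_lt.
Qed.

Lemma enumerated_big_ramsey (S : structure (ext L)) : enumerated S ->
  ultrahomogeneous (reduct S) -> strong_amalgamation (reduct S) ->
  finite_big_ramsey_degrees (reduct S) -> finite_big_ramsey_degrees S.
Proof.
move=> /enumerated_idx [e [idx [eK idxK ltSE]]] S_uh S_sap S_brd A [finA [a0]].
have [n n_deg] := S_brd (reduct A) (conj finA (inhabits (reduct_emb a0))).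
exists n => k chi.
(* embeddings of the reduct that do not preserve [<] get an arbitrary colour *)
pose chi' (u : Emb (reduct A) (reduct S)) :=
  if excluded_middle_informative (is_emb (A := A) (B := S) u) is left uP
  then chi (exist _ _ uP) else chi a0.
have [w [s [sn w_deg]]] := n_deg k chi'.
have w_inj : injective (fun x => idx (w x)).
  by move=> x y /(can_inj idxK) /(emb_inj (f := w)).
have [v v_incr] := exists_emb_increasing (X := reduct S) eK idxK S_uh S_sap w_inj.
have h_emb : is_emb (A := S) (B := S) (fun x => w (v x)).
  apply: is_emb_of_reduct; first exact: is_emb_comp.
  move=> x y; rewrite !ltSE -(leqW_mono (leq_mono v_incr) (idx x) (idx y)) /=.
  by rewrite !idxK.
exists (exist _ _ h_emb), s; split=> // u.
have := w_deg (comp v (reduct_emb u)); rewrite /chi'.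
case: excluded_middle_informative => [uP|[]]; last exact: proj2_sig (comp (exist _ _ h_emb) u).
by congr (chi _ \in s); apply: eq_emb.
Qed.

End Ordered.

Section OnePointExtension.
Variables (L : language) (S : structure (ext L)) (e : nat -> S) (idx : S -> nat).
Hypotheses (idxK : cancel idx e) (ltSE : forall x y : S, ltS x y <-> idx x < idx y).
Hypotheses (S_uh : ultrahomogeneous (reduct S)) (S_sap : strong_amalgamation (reduct S)).
Variables (Jr : FinObj (reduct S) -> FinObj (reduct S))
  (Jrm : forall A B : FinObj (reduct S), Emb (Fin A) (Fin B) -> Emb (Fin (Jr A)) (Fin (Jr B))).
Hypothesis Jr_new : forall A : FinObj (reduct S), (forall x, pr A x -> pr (Jr A) x) /\
  exists p, pr (Jr A) p /\ ~ pr A p /\ forall q, pr (Jr A) q -> ~ pr A q -> q = p.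
Hypothesis Jrm_ext : forall (A B : FinObj (reduct S)) (f : Emb (Fin A) (Fin B))
  (x : Fin (Jr A)) (y : Fin A), proj1_sig x = proj1_sig y -> proj1_sig (Jrm f x) = proj1_sig (f y).
Hypothesis Jrm_new : forall (A B : FinObj (reduct S)) (f : Emb (Fin A) (Fin B)) (x : Fin (Jr A)),
  ~ pr A (proj1_sig x) -> ~ pr B (proj1_sig (Jrm f x)).

Lemma finite_FinObj (A : FinObj S) : finite_pred (pr A).
Proof. exact: (proj1 (proj2_sig A)). Qed.

Definition Jr_point (A : FinObj S) : S :=
  proj1_sig (constructive_indefinite_description _ (proj2 (Jr_new A))).

Lemma Jr_point_spec A : pr (Jr A) (Jr_point A) /\ ~ pr A (Jr_point A) /\
  forall q, pr (Jr A) q -> ~ pr A q -> q = Jr_point A.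
Proof. exact: (proj2_sig (constructive_indefinite_description _ (proj2 (Jr_new A)))). Qed.

Lemma in_Jr A z : pr (Jr A) z <-> pr A z \/ z = Jr_point A.
Proof.
have [A_Jr _] := Jr_new A; have [Jr_pt [_ Jr_point_uniq]] := Jr_point_spec A.
split=> [Jz|[/A_Jr //|-> //]].
by have [Az|nAz] := classic (pr A z); [left | right; apply: Jr_point_uniq].
Qed.

Lemma exists_J_point A : exists p, (forall a, pr A a -> idx a < idx p) /\
  partial_emb (X := reduct S) (pr (Jr A)) (upd id (Jr_point A) p).
Proof.
have [M AM] := finite_bounded idx (finite_FinObj A).
have [_ [nA_pt _]] := Jr_point_spec A.
have [p [pM pP]] := partial_emb_extend S_uh S_sap (finite_FinObj A)
  (finite_idx_lt (X := reduct S) idxK M) nA_pt (partial_emb_id (X := reduct S) _).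
exists p; split; last by apply: (partial_emb_restr pP) => // z /in_Jr.
by move=> a /AM aM; apply: leq_trans aM _; rewrite leqNgt; apply/negP.
Qed.

Definition J_point A : S :=
  proj1_sig (constructive_indefinite_description _ (exists_J_point A)).

Lemma J_point_gt A a : pr A a -> idx a < idx (J_point A).
Proof. exact: (proj1 (proj2_sig (constructive_indefinite_description _ (exists_J_point A)))). Qed.

Lemma partial_emb_J_point A :
  partial_emb (X := reduct S) (pr (Jr A)) (upd id (Jr_point A) (J_point A)).
Proof. exact: (proj2 (proj2_sig (constructive_indefinite_description _ (exists_J_point A)))). Qed.

Lemma J_point_notin A : ~ pr A (J_point A).
Proof. by move=> /J_point_gt; rewrite ltnn. Qed.

Lemma J_point_neq A z : pr A z -> z <> J_point A.
Proof. by move=> Az zE; apply: (@J_point_notin A); rewrite -zE. Qed.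

Definition JP A z := pr A z \/ z = J_point A.

Lemma JP_FinObj A : finite_pred (JP A) /\ exists x, JP A x.
Proof.
split; last by exists (J_point A); right.
by apply: finite_predU; [apply: finite_FinObj | apply: finite_pred1].
Qed.

Definition J A : FinObj S := exist _ (JP A) (JP_FinObj A).

Definition jfun A B (f : Fin A -> Fin B) : S -> S :=
  upd (lift_emb (fun z => proj1_sig (f z))) (J_point A) (J_point B).

Lemma jfun_in A B (f : Fin A -> Fin B) z (Az : pr A z) :
  jfun f z = proj1_sig (f (exist _ z Az)).
Proof. by rewrite /jfun upd_neq ?(lift_embE _ Az) //; apply: J_point_neq. Qed.

Lemma jfun_J_point A B (f : Fin A -> Fin B) : jfun f (J_point A) = J_point B.
Proof. exact: upd_eq. Qed.

Lemma jfun_JP A B (f : Fin A -> Fin B) z : JP A z -> JP B (jfun f z).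
Proof.
move=> [Az|->]; last by right; apply: jfun_J_point.
by left; rewrite (jfun_in _ Az); apply: proj2_sig.
Qed.

(* On [J A], [jfun f] is [Jrm f] transported along the isomorphisms [Jr A ~ J A]
   and [Jr B ~ J B] that swap the new points. *)
Lemma partial_emb_jfun_reduct A B (f : Emb (Fin A) (Fin B)) :
  partial_emb (X := reduct S) (JP A) (jfun f).
Proof.
pose fr := Jrm (reduct_emb f); pose jr := lift_emb (fun z => proj1_sig (fr z)).
pose back := upd id (J_point A) (Jr_point A).
have [JrA_pt [nA_pt _]] := Jr_point_spec A.
have [_ [nB_pt ptB_uniq]] := Jr_point_spec B.
have backK z : JP A z -> pr (Jr A) (back z) /\ upd id (Jr_point A) (J_point A) (back z) = z.
  move=> [Az|->]; last by rewrite /back !upd_eq.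
  have pt_neq : z <> Jr_point A by move=> zE; apply: nA_pt; rewrite -zE.
  by rewrite /back upd_neq ?upd_neq; [split; [apply/in_Jr; left|] | | apply: J_point_neq].
have jr_Jr z : pr (Jr A) z -> pr (Jr B) (jr z).
  by move=> Jz; rewrite /jr (lift_embE _ Jz); apply: proj2_sig.
have backP := partial_emb_inv (partial_emb_J_point A) backK.
have jrP : partial_emb (X := reduct S) (pr (Jr A)) jr.
  exact: (partial_emb_lift (comp (val_emb (X := reduct S) _) fr)).
have := partial_emb_comp (X := reduct S) (fun z Jz => proj1 (backK z Jz)) backP
          (partial_emb_comp jr_Jr jrP (partial_emb_J_point B)).
move/partial_emb_restr; apply=> // z [Az|->] /=.
  have Jz : pr (Jr A) z by apply/in_Jr; left.
  rewrite /back (upd_neq id (Jr_point A) (J_point_neq Az)).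
  rewrite /jr (lift_embE _ Jz) (@Jrm_ext _ _ _ _ (exist _ z Az)) // (jfun_in _ Az).
  by rewrite upd_neq // => fE; apply: nB_pt; rewrite -fE; apply: proj2_sig.
have frE : proj1_sig (fr (exist _ (Jr_point A) JrA_pt)) = Jr_point B.
  apply: ptB_uniq; first exact: proj2_sig.
  exact: (@Jrm_new _ _ _ (exist _ (Jr_point A) JrA_pt)).
by rewrite /back upd_eq /jr (lift_embE (X := reduct S) _ JrA_pt) frE upd_eq jfun_J_point.
Qed.

Lemma ltS_J_point A a : pr A a -> ltS a (J_point A).
Proof. by move=> /J_point_gt /ltSE. Qed.

Lemma partial_emb_jfun A B (f : Emb (Fin A) (Fin B)) : partial_emb (JP A) (jfun f).
Proof.
apply: (partial_emb_of_reduct (partial_emb_jfun_reduct f)).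
move=> x y [Ax|->] [Ay|->]; rewrite ?jfun_J_point ?(jfun_in _ Ax) ?(jfun_in _ Ay).
- by rewrite -!ltS_sub -emb_ltS ltS_sub.
- by split=> _; [apply: (ltS_J_point (proj2_sig _)) | apply: ltS_J_point].
- by split=> /ltSE; rewrite ltnNge ltnW ?J_point_gt //; apply: proj2_sig.
- by rewrite !ltSE !ltnn.
Qed.

Definition Jm A B (f : Emb (Fin A) (Fin B)) : Emb (Fin (J A)) (Fin (J B)) :=
  sub_emb (@jfun_JP A B f) (partial_emb_jfun f).

Lemma Jm_in A B (f : Emb (Fin A) (Fin B)) (x : Fin (J A)) (y : Fin A) :
  proj1_sig x = proj1_sig y -> proj1_sig (Jm f x) = proj1_sig (f y).
Proof. by case: x y => [x Jx] [y Ay] /= xy; subst y; rewrite (jfun_in _ Ay). Qed.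

Lemma J_out A (x : Fin (J A)) : ~ pr A (proj1_sig x) -> proj1_sig x = J_point A.
Proof. by case: x => x [|]. Qed.

Lemma Jm_out A B (f : Emb (Fin A) (Fin B)) (x : Fin (J A)) :
  ~ pr A (proj1_sig x) -> proj1_sig (Jm f x) = J_point B.
Proof. by move=> /J_out /= ->; apply: jfun_J_point. Qed.

Lemma nat_1pt_ext_J : nat_1pt_ext S.
Proof.
have JmE A B (f : Emb (Fin A) (Fin B)) x (Ax : pr A (proj1_sig x)) :
  proj1_sig (Jm f x) = proj1_sig (f (exist _ _ Ax)) by apply: Jm_in.
exists J, Jm; split; [|split; [|split; [|split]]].
- move=> A; apply: eq_emb => x; apply: proj1_sig_inj.
  have [Ax|nAx] := classic (pr A (proj1_sig x)); first by rewrite (JmE _ _ _ _ Ax).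
  by rewrite Jm_out // J_out.
- move=> A B C f g; apply: eq_emb => x; apply: proj1_sig_inj.
  change (proj1_sig (Jm (comp g f) x) = proj1_sig (Jm g (Jm f x))).
  have [Ax|nAx] := classic (pr A (proj1_sig x)).
    by rewrite (JmE _ _ _ _ Ax) (@Jm_in _ _ g _ (f (exist _ _ Ax))) // (JmE _ _ _ _ Ax).
  have nBfx : ~ pr B (proj1_sig (Jm f x)) by rewrite (Jm_out _ nAx); apply: J_point_notin.
  by rewrite (Jm_out _ nBfx) (Jm_out _ nAx).
- move=> A; split=> [x|]; first by left.
  by exists (J_point A); split; [right | split=> [|q [] //]; apply: J_point_notin].
- exact: Jm_in.
- by move=> A B f x /(Jm_out f) ->; apply: J_point_notin.
Qed.

Definition init_seg (y : S) : FinObj S :=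
  exist _ (fun z : S => is_true (idx z < (idx y).+1))
    (conj (finite_idx_lt idxK _) (ex_intro _ y (ltnSn _))).

Definition J_top A : Fin (J A) := exist (JP A) (J_point A) (or_intror erefl).

Lemma JP_in A z : pr A z -> JP A z.
Proof. by left. Qed.

Definition J_incl A : Emb (Fin A) (Fin (J A)) :=
  sub_emb (phi := id) (@JP_in A) (partial_emb_id _).

Lemma init_seg_mem A (u : Emb (Fin (J A)) S) z :
  pr A z -> pr (init_seg (u (J_top A))) (lift_emb (comp u (J_incl A)) z).
Proof.
move=> Az; rewrite (lift_embE _ Az) /= ltnS; apply: ltnW; apply/ltSE/(emb_ltS u)/ltS_sub.
exact: ltS_J_point.
Qed.

Definition restr_seg A (u : Emb (Fin (J A)) S) : Ucod A :=
  existT _ (init_seg (u (J_top A)))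
    (sub_emb (@init_seg_mem A u) (partial_emb_lift (comp u (J_incl A)))).

Lemma existT_init_seg (A : FinObj S) y y' (g : Emb (Fin A) (Fin (init_seg y)))
  (g' : Emb (Fin A) (Fin (init_seg y'))) : y = y' ->
  (forall a, proj1_sig (g a) = proj1_sig (g' a)) ->
  existT (fun C : FinObj S => Emb (Fin A) (Fin C)) (init_seg y) g = existT _ (init_seg y') g'.
Proof. by move=> yy' gg'; subst y'; congr existT; apply: eq_emb => a; apply: proj1_sig_inj. Qed.

Lemma approximable_J : approximable S.
Proof.
exists J, restr_seg => A B f u; exists (Jm f); apply: existT_init_seg => [|[a Aa]] /=.
  by congr (u _); apply: proj1_sig_inj; apply: jfun_J_point.
rewrite (lift_embE _ Aa) (lift_embE _ (proj2_sig (f (exist _ a Aa)))).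
by congr (u _); apply: proj1_sig_inj; apply: jfun_in.
Qed.

End OnePointExtension.

Lemma enumerated_nat_1pt_ext_approximable (L : language) (S : structure (ext L)) :
  enumerated S -> ultrahomogeneous (reduct S) -> strong_amalgamation (reduct S) ->
  nat_1pt_ext (reduct S) -> nat_1pt_ext S /\ approximable S.
Proof.
move=> /enumerated_idx [e [idx [_ idxK ltSE]]] S_uh S_sap.
move=> [Jr [Jrm [_ [_ [Jr_new [Jrm_ext Jrm_new]]]]]].
by split; [apply: nat_1pt_ext_J | apply: approximable_J]; eassumption.
Qed.

Lemma approx_via_big_ramsey (L : language) (X : structure L) (F : FinObj X -> FinObj X)
  (Phi : forall A : FinObj X, Emb (Fin (F A)) X -> Ucod A)
  (iota : forall B : FinObj X, Emb (Fin B) X) :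
  finite_big_ramsey_degrees X -> approx_via F Phi ->
  forall A : FinObj X, exists n : nat, forall (k : nat) (chi : Ucod A -> 'I_k),
  exists (h : Emb X X) (s : seq 'I_k), (size s <= n)%N /\
    forall (B : FinObj X) (f : Emb (Fin A) (Fin B)), chi (star F Phi iota h f) \in s.
Proof.
move=> X_brd approx A.
have [n n_deg] := X_brd _ (in_age_sub (proj1 (proj2_sig (F A)))).
exists n => k chi; have [h [s [sn h_deg]]] := n_deg k (fun u => chi (Phi A u)).
exists h, s; split=> // B f.
have [f' Phi_f'] := approx A B f (comp h (iota (F B))).
rewrite /star -Phi_f'.
have -> : comp (comp h (iota (F B))) f' = comp h (comp (iota (F B)) f') by apply: eq_emb.
exact: h_deg.
Qed.

Theorem theorem6p7 (L : language) (S : structure (ext L))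
  (Henum : enumerated S)
  (Hfraisse : fraisse_limit (reduct S))
  (Hbrd : finite_big_ramsey_degrees (reduct S))
  (Hsap : strong_amalgamation (reduct S))
  (H1pt : nat_1pt_ext (reduct S)) :
  (* (a) *) nat_1pt_ext S /\
  (* (b) *) approximable S /\
  (* (c) *)
  (forall (F : FinObj S -> FinObj S)
          (Fm : forall A B : FinObj S, Emb (Fin A) (Fin B) -> Emb (Fin (F A)) (Fin (F B)))
          (Phi : forall A : FinObj S, Emb (Fin (F A)) S -> Ucod A)
          (iota : forall B : FinObj S, Emb (Fin B) S),
      is_functor F Fm -> approx_via F Phi ->
      forall A : FinObj S, exists n : nat,
        forall (k : nat) (chi : Ucod A -> 'I_k),
        exists h : Emb S S, exists s : seq 'I_k,
          (size s <= n)%N /\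
          forall (B : FinObj S) (f : Emb (Fin A) (Fin B)), chi (star F Phi iota h f) \in s).
Proof.
have [_ S_uh] := Hfraisse.
have [S_ext S_approx] := enumerated_nat_1pt_ext_approximable Henum S_uh Hsap H1pt.
split=> //; split=> // F Fm Phi iota _.
exact: approx_via_big_ramsey (enumerated_big_ramsey Henum S_uh Hsap Hbrd).
Qed.
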